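(* Let $m$ be an odd positive integer and $\ell=\lceil\log_2 m\rceil$. If $\mathfrak K(m)>2^\ell+1$, then $\mathbf t_{m+1}\mathbf t_{m+2}=11$ and $\mathbf t_{2m+1}\mathbf t_{2m+2}=10$.
   Context: The Thue–Morse word is $\mathbf t=\mathbf t_1\mathbf t_2\cdots$ where $\mathbf t_i\in\{0,1\}$ has the parity of the number of $1$'s in the binary expansion of $i-1$. For positive integers $\alpha\le\beta$, $\langle\alpha,\beta\rangle=\mathbf t_\alpha\cdots\mathbf t_\beta$. A $k$-anti-power is a word $w_1\cdots w_k$ with $w_1,\dots,w_k$ pairwise distinct words of equal length. For a positive integer $m$, $\mathfrak K(m)$ is the smallest positive integer $k$ such that the prefix $\langle 1,km\rangle$ of $\mathbf t$ is not a $k$-anti-power. *)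

From mathcomp Require Import all_boot.
Set Implicit Arguments. Unset Strict Implicit. Unset Printing Implicit Defensive.

Fixpoint popcount_aux (fuel n : nat) : nat :=
  match fuel with
  | 0 => 0
  | f.+1 => if n is 0 then 0 else odd n + popcount_aux f n./2
  end.
Definition popcount (n : nat) : nat := popcount_aux n n.

(* Thue-Morse word, 1-indexed: t_i = parity of popcount (i-1) *)
Definition tm (i : nat) : bool := odd (popcount i.-1).

Definition factor (a b : nat) : seq bool := [seq tm i | i <- iota a (b.+1 - a)].

(* the j-th block (0-indexed) of length m of a prefix: <j*m+1, (j+1)*m> *)
Definition block (m j : nat) : seq bool := factor (j * m).+1 (j.+1 * m).

Definition prefix_anti_power (k m : nat) : Prop :=
  forall i j, i < k -> j < k -> block m i = block m j -> i = j.

(* K(m) > N  <->  the least k >= 1 with <1,km> not a k-anti-power exceeds N,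
   i.e. <1,km> is a k-anti-power for every 1 <= k <= N. *)
Definition K_gt (m N : nat) : Prop :=
  forall k, 0 < k -> k <= N -> prefix_anti_power k m.
Lemma tm_check : [seq tm i | i <- iota 1 8] = [:: false; true; true; false; true; false; false; true].
Proof. by []. Qed.
Lemma uplog_check : (up_log 2 1, up_log 2 3, up_log 2 4, up_log 2 5) = (0, 2, 2, 3).
Proof. by []. Qed.

From mathcomp Require Import all_boot.
From mathcomp Require Import zify.

(* Write [tmz n := t_(n+1)] for the Thue-Morse word indexed from 0, so that
   [tmz (2^k a + b) = tmz a (+) tmz b] whenever [b < 2^k]. Since
   [m <= 2^l], block [2^l] of the prefix is block [0] complemented by
   [tmz m], so [tmz m] must hold. When [l > 0], put [h = 2^(l-1)], so that
   [m <= 2h]; splitting [h m + r] as [h (m+1) + (r - h)] for [r >= h] shows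
   that block [h] equals block [2h] unless [tmz (m+1)] holds. The claims on
   positions [2m+1], [2m+2] follow from [tmz (2n) = tmz n] and
   [tmz (2n+1) = ~~ tmz n]. *)

Lemma half_lt n : n.+1./2 <= n.
Proof. by have := odd_double_half n.+1; rewrite -muln2; case: odd => /=; lia. Qed.

Lemma popcount_aux_fuel f g n :
  n <= f -> n <= g -> popcount_aux f n = popcount_aux g n.
Proof.
elim: f g n => [|f IHf] [|g] [|n] //= nf ng.
by congr (_ + _); apply: IHf; have := half_lt n; lia.
Qed.

Lemma popcountE n : popcount n = if n is 0 then 0 else odd n + popcount n./2.
Proof.
case: n => [|n] //; rewrite /popcount /=; congr (_ + _).
by apply: popcount_aux_fuel => //; have := half_lt n; lia.
Qed.

Lemma popcount_bit (c : bool) n : popcount (c + n.*2) = c + popcount n.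
Proof.
case def_x: (c + n.*2) => [|x]; first by case: c n def_x => [] [].
rewrite popcountE -def_x half_bit_double oddD odd_double addbF.
by case: c def_x.
Qed.

Lemma popcount_add_pow2 k a b :
  b < 2 ^ k -> popcount (2 ^ k * a + b) = popcount a + popcount b.
Proof.
elim: k b => [|k IHk] b.
  by rewrite expn0 ltnS leqn0 => /eqP->; rewrite mul1n !addn0.
rewrite -(odd_double_half b) expnS => lt_b.
have -> : 2 * 2 ^ k * a + (odd b + (b./2).*2) = odd b + (2 ^ k * a + b./2).*2.
  by rewrite -!muln2; lia.
rewrite !popcount_bit IHk; first lia.
by move: lt_b; rewrite -muln2; case: (odd b) => /=; lia.
Qed.

Definition tmz n := odd (popcount n).

Lemma tmz_add_pow2 k a b : b < 2 ^ k -> tmz (2 ^ k * a + b) = tmz a (+) tmz b.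
Proof. by move=> lt_b; rewrite /tmz popcount_add_pow2 // oddD. Qed.

Lemma tmz_double n : tmz n.*2 = tmz n.
Proof. by rewrite /tmz -[n.*2]add0n (popcount_bit false). Qed.

Lemma tmz_double_add1 n : tmz n.*2.+1 = ~~ tmz n.
Proof. by rewrite /tmz -add1n (popcount_bit true) add1n. Qed.

Lemma blockE m j : block m j = [seq tmz (j * m + i) | i <- iota 0 m].
Proof.
rewrite /block /factor.
have -> : (j.+1 * m).+1 - (j * m).+1 = m by rewrite mulSn; lia.
by rewrite -[(j * m).+1]addn0 iotaDl -map_comp; apply: eq_map => i /=; rewrite addSn.
Qed.

Lemma eq_block m i j :
  (forall r, r < m -> tmz (i * m + r) = tmz (j * m + r)) -> block m i = block m j.
Proof.
move=> eq_ij; rewrite !blockE; apply/eq_in_map => r.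
by rewrite mem_iota => /andP[_ lt_r]; apply: eq_ij.
Qed.

Lemma anti_power_pow2_tmz k m :
  m <= 2 ^ k -> prefix_anti_power (2 ^ k).+1 m -> tmz m.
Proof.
move=> le_m_2k anti; case tmz_m: (tmz m) => //.
suff eq_blocks : block m 0 = block m (2 ^ k).
  by move/eqP: (anti _ _ (ltn0Sn _) (ltnSn _) eq_blocks); rewrite eq_sym expn_eq0.
apply: eq_block => r lt_r; rewrite mul0n add0n tmz_add_pow2 ?tmz_m //.
exact: leq_trans lt_r le_m_2k.
Qed.

Lemma anti_power_pow2_tmzS k m :
  m <= 2 ^ k.+1 -> prefix_anti_power (2 ^ k.+1).+1 m -> tmz m.+1.
Proof.
move=> le_m_2k1 anti; case tmz_m1: (tmz m.+1) => //.
have tmz_m := anti_power_pow2_tmz _ _ le_m_2k1 anti.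
suff eq_blocks : block m (2 ^ k) = block m (2 ^ k.+1).
  have lt_2k : 2 ^ k < (2 ^ k.+1).+1 by rewrite ltnS leq_exp2l.
  by move/eqP: (anti _ _ lt_2k (ltnSn _) eq_blocks); rewrite eqn_exp2l // => /eqP; lia.
apply: eq_block => r lt_r; rewrite [in RHS]tmz_add_pow2; last lia.
have [lt_r_2k|le_2k_r] := ltnP r (2 ^ k); first by rewrite tmz_add_pow2.
have lt_s : r - 2 ^ k < 2 ^ k by move: le_m_2k1; rewrite expnS; lia.
have -> : 2 ^ k * m + r = 2 ^ k * m.+1 + (r - 2 ^ k) by rewrite mulnS; lia.
rewrite [in RHS](_ : r = 2 ^ k * 1 + (r - 2 ^ k)); last lia.
by rewrite !tmz_add_pow2 // tmz_m tmz_m1; case: tmz.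
Qed.

Theorem lemma3 (m : nat) (Hm : 0 < m) (Hodd : odd m) :
  K_gt m (2 ^ up_log 2 m + 1) ->
  (tm m.+1, tm m.+2) = (true, true) /\ (tm (2 * m).+1, tm (2 * m).+2) = (true, false).
Proof.
move=> K_m.
have anti : prefix_anti_power (2 ^ up_log 2 m).+1 m by apply: K_m; rewrite ?addn1.
have le_m := up_logP m (isT : 1 < 2).
have tmz_m : tmz m := anti_power_pow2_tmz _ _ le_m anti.
have tmz_m1 : tmz m.+1.
  move: le_m anti; case: up_log => [|k] le_m anti; last exact: anti_power_pow2_tmzS anti.
  by have -> : m = 1 by move: le_m; rewrite expn0; lia.
have tmE n : tm n.+1 = tmz n by [].
by rewrite mul2n !tmE tmz_double tmz_double_add1 tmz_m tmz_m1.
Qed.
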